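(* Let $d\ge2$ and let $Q$ be a qplex. (1) If $s_1,\dots,s_{d^2}\in Q\cap S_{\rm o}$ are the vertices of a regular simplex, then $r(i|j)=s_i(j)$ defines a type-preserving measurement for $Q$, with stretched measurement matrix $R_{ij}=(d+1)s_i(j)-\frac1d$. (2) If $R$ is a $d^2\times d^2$ real orthogonal matrix such that $RQ=\{Rq:q\in Q\}$ is a qplex, then $R$ is the stretched measurement matrix of a type-preserving measurement for $Q$.
   Context: Fix an integer $d\ge 2$. $\langle\cdot,\cdot\rangle$ is the standard inner product on $\mathbb{R}^{d^2}$, $\|\cdot\|$ the Euclidean norm. $\Delta=\{p\in\mathbb{R}^{d^2}: p(i)\ge0,\ \sum_ip(i)=1\}$; $H=\{u\in\mathbb{R}^{d^2}:\sum_i u(i)=1\}$; $c=(1/d^2,\dots,1/d^2)$. For $A\subseteq H$ the polar is $A^*=\{u\in H:\langle u,v\rangle\ge\frac{1}{d(d+1)}\ \forall v\in A\}$. Out-ball $B_{\rm o}=\{u\in H:\|u-c\|\le r_{\rm o}\}$, $r_{\rm o}^2=\frac{d-1}{d^2(d+1)}$, boundary sphere $S_{\rm o}$. A qplex is a set $Q\subseteq\Delta\cap B_{\rm o}$ with $Q^*=Q$. A measurement (with $d^2$ outcomes) is an array of reals $r(i|j)\ge0$, $i,j\in\{1,\dots,d^2\}$, with $\sum_i r(i|j)=1$ for every $j$. For a qplex $Q$ and $q\in Q$, define $q_r(i)=\sum_j\big[(d+1)q(j)-\frac1d\big]r(i|j)$ and $Q_r=\{q_r:q\in Q\}$. The measurement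 is type-preserving for $Q$ if $Q_r$ is a qplex, and $Q$-preserving if $Q_r=Q$. Its stretched measurement matrix is $R_{ij}=(d+1)r(i|j)-\frac1d\sum_k r(i|k)$, so that $q_r=Rq$. Points $s_1,\dots,s_{d^2}$ are vertices of a regular simplex if they are distinct and all pairwise distances are equal. *)

From HB Require Import structures.
From mathcomp Require Import all_boot all_order all_algebra.
Set Implicit Arguments. Unset Strict Implicit. Unset Printing Implicit Defensive.
Import Order.TTheory GRing.Theory Num.Theory.
Local Open Scope ring_scope.

Section Qplex.
Variables (R : realFieldType) (d : nat).

Definition vec := 'I_(d ^ 2) -> R.

Definition dot (u v : vec) : R := \sum_i u i * v i.
Definition normsq (u : vec) : R := dot u u.
Definition vsub (u v : vec) : vec := fun i => u i - v i.

Definition inDelta (p : vec) : Prop := (forall i, 0 <= p i) /\ \sum_i p i = 1.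
Definition inH (u : vec) : Prop := \sum_i u i = 1.

Definition cvec : vec := fun _ => 1 / (d ^ 2)%:R.

Definition polar (A : vec -> Prop) : vec -> Prop :=
  fun u => inH u /\ forall v, A v -> 1 / (d * (d + 1))%:R <= dot u v.

Definition ro2 : R := (d - 1)%:R / ((d ^ 2)%:R * (d + 1)%:R).

Definition inBo (u : vec) : Prop := inH u /\ normsq (vsub u cvec) <= ro2.
Definition inSo (u : vec) : Prop := inH u /\ normsq (vsub u cvec) = ro2.

Definition qplex (Q : vec -> Prop) : Prop :=
  (forall q, Q q -> inDelta q /\ inBo q) /\ (forall u, polar Q u <-> Q u).

(* measurement with d^2 outcomes: r i j = r(i|j) *)
Definition measurement (r : 'I_(d ^ 2) -> 'I_(d ^ 2) -> R) : Prop :=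
  (forall i j, 0 <= r i j) /\ (forall j, \sum_i r i j = 1).

Definition qr (r : 'I_(d ^ 2) -> 'I_(d ^ 2) -> R) (q : vec) : vec :=
  fun i => \sum_j ((d + 1)%:R * q j - 1 / d%:R) * r i j.

Definition image_r (Q : vec -> Prop) (r : 'I_(d ^ 2) -> 'I_(d ^ 2) -> R) : vec -> Prop :=
  fun u => exists2 q, Q q & u = qr r q.

Definition type_preserving (Q : vec -> Prop) r : Prop :=
  measurement r /\ qplex (image_r Q r).

Definition Q_preserving (Q : vec -> Prop) r : Prop :=
  measurement r /\ (forall u, image_r Q r u <-> Q u).

Definition stretched (r : 'I_(d ^ 2) -> 'I_(d ^ 2) -> R) : 'M[R]_(d ^ 2) :=
  \matrix_(i, j) ((d + 1)%:R * r i j - 1 / d%:R * \sum_k r i k).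

Definition mxact (M : 'M[R]_(d ^ 2)) (q : vec) : vec := fun i => \sum_j M i j * q j.
Definition image_mx (M : 'M[R]_(d ^ 2)) (Q : vec -> Prop) : vec -> Prop :=
  fun u => exists2 q, Q q & u = mxact M q.

(* vertices of a regular simplex: distinct, all pairwise distances equal
   (stated via squared distances, equivalent since distances are >= 0) *)
Definition regular_simplex (s : 'I_(d ^ 2) -> vec) : Prop :=
  injective s /\
  exists a : R, forall i j, i != j -> normsq (vsub (s i) (s j)) = a.

Definition orthogonal_mx (M : 'M[R]_(d ^ 2)) : Prop := M^T *m M = 1%:M.

End Qplex.

From HB Require Import structures.
From mathcomp Require Import all_boot all_order all_algebra.
From mathcomp Require Import ring lra.
From Stdlib Require Import FunctionalExtensionality PropExtensionality.
Set Implicit Arguments. Unset Strict Implicit. Unset Printing Implicit Defensive.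
Import Order.TTheory GRing.Theory Num.Theory.
Local Open Scope ring_scope.

(* Both parts rest on one criterion: an orthogonal matrix [M] with unit column
   sums that maps [Q] into the nonnegative orthant maps [Q] onto a qplex.
   Indeed [M] then also has unit row sums, so it fixes the centre [c] and
   preserves [H], distances to [c] and inner products; hence it commutes with
   taking polars.
   (1) The rows [s_i - c] sum to zero, so their Gram matrix [x I + y J] is
   singular; this pins down the side of the simplex and makes the stretched
   matrix orthogonal.  Nonnegativity of [R q] is the polar inequality
   [<s_i, q> >= 1 / (d (d + 1))] for [s_i] in [Q = Q*].
   (2) [Q] contains a ball about [c] in [H], so a linear functional equal to 1
   on [Q] is the all-ones functional; hence [R] has unit column sums, thus unit
   row sums, and the rows of [r(i|j) = (R_ij + 1/d) / (d + 1)] lie in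
   [Q* = Q], hence in the simplex. *)

Section VectorAlgebra.
Variables (R : realFieldType) (d : nat).
Local Notation N := (d ^ 2)%N.
Local Notation vec := (vec R d).
Local Notation c := (@cvec R d).

Lemma sum_mul_eq (F : 'I_N -> R) k : \sum_j F j * (j == k)%:R = F k.
Proof.
rewrite (bigD1 k) //= eqxx mulr1 big1 ?addr0 // => j /negbTE ->.
by rewrite mulr0.
Qed.

Definition colv (u : vec) : 'cV[R]_N := \col_j u j.

Lemma colv_inj : injective colv.
Proof.
move=> u v /matrixP uv; apply: functional_extensionality => j.
by have := uv j 0; rewrite !mxE.
Qed.

Lemma dot_colv (u v : vec) : dot u v = ((colv u)^T *m colv v) 0 0.
Proof. by rewrite /dot !mxE; apply: eq_bigr => j _; rewrite !mxE. Qed.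

Lemma colv_mxact (M : 'M[R]_N) (u : vec) : colv (mxact M u) = M *m colv u.
Proof.
apply/matrixP => i j; rewrite (ord1 j) !mxE.
by apply: eq_bigr => k _; rewrite !mxE.
Qed.

Lemma mxact_mul (A B : 'M[R]_N) (u : vec) :
  mxact A (mxact B u) = mxact (A *m B) u.
Proof. by apply: colv_inj; rewrite !colv_mxact mulmxA. Qed.

Lemma mxact1 (u : vec) : mxact 1%:M u = u.
Proof. by apply: colv_inj; rewrite colv_mxact mul1mx. Qed.

Lemma mxact_vsub (M : 'M[R]_N) (u v : vec) :
  mxact M (vsub u v) = vsub (mxact M u) (mxact M v).
Proof.
apply: functional_extensionality => i; rewrite /mxact /vsub -sumrB.
by apply: eq_bigr => j _; rewrite mulrBr.
Qed.

Lemma dot_mxact_tr (M : 'M[R]_N) (u v : vec) :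
  dot u (mxact M v) = dot (mxact M^T u) v.
Proof. by rewrite !dot_colv !colv_mxact trmx_mul trmxK mulmxA. Qed.

Lemma dot_mxact_orthogonal (M : 'M[R]_N) (u v : vec) : orthogonal_mx M ->
  dot (mxact M u) (mxact M v) = dot u v.
Proof.
by move=> MO; rewrite dot_mxact_tr mxact_mul MO mxact1.
Qed.

Lemma sum_mxact (M : 'M[R]_N) (u : vec) : (forall j, \sum_i M i j = 1) ->
  \sum_i mxact M u i = \sum_j u j.
Proof.
move=> colM; rewrite /mxact exchange_big; apply: eq_bigr => j _.
by rewrite -mulr_suml colM mul1r.
Qed.

Lemma sum_affine_mul (u v : vec) a b :
  \sum_k (a * u k + b) * (a * v k + b) =
  a ^+ 2 * dot u v + a * b * (\sum_k u k + \sum_k v k) + N%:R * b ^+ 2.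
Proof.
rewrite (eq_bigr (fun k => a ^+ 2 * (u k * v k) + a * b * (u k + v k) + b ^+ 2));
  last by move=> k _; ring.
rewrite !big_split /= -!mulr_sumr big_split /= sumr_const card_ord mulr_natl.
by rewrite /dot mulrnAr expr2.
Qed.

Lemma normsq_vsub (u v : vec) :
  normsq (vsub u v) = normsq u - 2 * dot u v + normsq v.
Proof.
rewrite /normsq /dot /vsub.
rewrite (eq_bigr (fun k => u k * u k - 2 * (u k * v k) + v k * v k));
  last by move=> k _; ring.
by rewrite big_split /= sumrB -mulr_sumr.
Qed.

Lemma normsq_ge0 (u : vec) : 0 <= normsq u.
Proof. by apply: sumr_ge0 => k _; rewrite -expr2 sqr_ge0. Qed.

Lemma dot_lower_bound (u v : vec) a :
  - (a ^+ 2 * normsq u + normsq v) <= 2 * a * dot u v.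
Proof.
have := normsq_ge0 (fun k => a * u k + v k).
rewrite /normsq /dot.
rewrite (eq_bigr (fun k => a ^+ 2 * (u k * u k) + 2 * a * (u k * v k) + v k * v k));
  last by move=> k _; ring.
rewrite !big_split /= -!mulr_sumr; lra.
Qed.

Lemma sum_vsub_cvec (u : vec) : (0 < d)%N -> inH u -> \sum_k vsub u c k = 0.
Proof.
move=> d0 Hu; have N0 : N%:R != 0 :> R by rewrite pnatr_eq0 -lt0n expn_gt0 d0.
rewrite /vsub sumrB Hu sumr_const card_ord /cvec mul1r.
by rewrite -[_ *+ N]mulr_natr mulVf ?subrr.
Qed.

Lemma dot_vsub_cvec (u v : vec) : (0 < d)%N -> inH u -> inH v ->
  dot u v = dot (vsub u c) (vsub v c) + 1 / N%:R.
Proof.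
move=> d0 Hu Hv; rewrite [LHS](eq_bigr (fun k =>
  (1 * vsub u c k + 1 / N%:R) * (1 * vsub v c k + 1 / N%:R))); last first.
  by move=> k _; rewrite /vsub /cvec !mul1r !subrK.
have N0 : N%:R != 0 :> R by rewrite pnatr_eq0 -lt0n expn_gt0 d0.
rewrite sum_affine_mul !sum_vsub_cvec // addr0 mulr0 addr0 expr1n mul1r.
by rewrite expr2 !mul1r mulrA mulfV // mul1r.
Qed.

Definition dir (k l : 'I_N) : vec := fun j => (j == k)%:R - (j == l)%:R.

Lemma dot_dir (u : vec) k l : dot u (dir k l) = u k - u l.
Proof.
rewrite /dot /dir (eq_bigr (fun j => u j * (j == k)%:R - u j * (j == l)%:R)).
  by rewrite sumrB !sum_mul_eq.
by move=> j _; rewrite mulrBr.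
Qed.

Lemma sum_dir k l : \sum_j dir k l j = 0.
Proof.
transitivity (dot (fun _ => 1) (dir k l)); last by rewrite dot_dir subrr.
by apply: eq_bigr => j _; rewrite mul1r.
Qed.

Lemma normsq_dir k l : k != l -> normsq (dir k l) = 2.
Proof.
move=> kl; rewrite /normsq dot_dir /dir !eqxx (negbTE kl) eq_sym (negbTE kl) /=.
by rewrite subr0 sub0r opprK.
Qed.

End VectorAlgebra.

Arguments dir {R d}.

Section ScalarPlusConstant.
Variables (R : fieldType) (n : nat).
Local Notation J := (const_mx 1 : 'M[R]_n).

Lemma mul_scalar_const (a b a' b' : R) :
  (a%:M + b *: J) *m (a'%:M + b' *: J) =
  (a * a')%:M + (a * b' + b * a' + n%:R * b * b') *: J.
Proof.
have JJ : J *m J = n%:R *: J.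
  apply/matrixP => i j; rewrite !mxE (eq_bigr (fun _ => 1)).
    by rewrite sumr_const card_ord mulr1.
  by move=> k _; rewrite !mxE mulr1.
rewrite mulmxDl !mulmxDr !mul_scalar_mx -!scalemxAl mul_mx_scalar -scalemxAr JJ.
rewrite scale_scalar_mx !scalerA -addrA; congr (_ + _).
by rewrite -!scalerDl; congr (_ *: _); ring.
Qed.

(* If [x + n y != 0], then [x I + y J] is invertible with inverse
   [x^-1 I - x^-1 y / (x + n y) J]; so would be [U], contradicting [U J = 0]. *)
Lemma gram_scalar_const_degenerate (U : 'M[R]_n) (x y : R) : (0 < n)%N ->
  U *m J = 0 -> U *m U^T = x%:M + y *: J -> x != 0 -> x + n%:R * y = 0.
Proof.
move=> n0 UJ UUt x0; apply/eqP; apply: contraT => xny0.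
pose G' := x^-1%:M + (- (x^-1 * (y / (x + n%:R * y)))) *: J.
have UG' : U *m (U^T *m G') = 1%:M.
  rewrite mulmxA UUt /G' mul_scalar_const mulfV // (_ : x * _ + _ + _ = 0).
    by rewrite scale0r addr0.
  by field; rewrite x0 xny0.
have [Uunit _] := mulmx1_unit UG'.
have : J = 0 by rewrite -(mulKmx Uunit J) UJ mulmx0.
by move/matrixP/(_ (Ordinal n0) (Ordinal n0)); rewrite !mxE => /eqP; rewrite oner_eq0.
Qed.

End ScalarPlusConstant.

Lemma orthogonal_row_sums1 (R : comPzRingType) n (M : 'M[R]_n) :
  M^T *m M = 1%:M -> (forall j, \sum_i M i j = 1) -> forall i, \sum_j M i j = 1.
Proof.
move=> MO colM i.
have MtJ : M^T *m const_mx 1 = const_mx 1 :> 'cV_n.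
  apply/matrixP => j k; rewrite !mxE -[RHS](colM j).
  by apply: eq_bigr => l _; rewrite !mxE mulr1.
have := congr1 (mulmx M) MtJ; rewrite mulmxA (mulmx1C MO) mul1mx.
move/matrixP/(_ i 0); rewrite mxE [RHS]mxE => ->.
by apply: eq_bigr => j _; rewrite mxE mulr1.
Qed.

Section Stretched.
Variables (R : realFieldType) (d : nat).
Local Notation N := (d ^ 2)%N.
Local Notation D := (d%:R : R).

Lemma qr_stretched r (q : vec R d) : inH q -> qr r q = mxact (stretched r) q.
Proof.
move=> Hq; apply: functional_extensionality => i; rewrite /qr /mxact.
rewrite (eq_bigr (fun j => (d + 1)%:R * (r i j * q j) - 1 / D * r i j)); last first.
  by move=> j _; ring.
rewrite [RHS](eq_bigr (fun j =>
  (d + 1)%:R * (r i j * q j) - (1 / D * \sum_k r i k) * q j)); last first.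
  by move=> j _; rewrite mxE; ring.
by rewrite !sumrB -!mulr_sumr Hq mulr1.
Qed.

Definition unstretch (M : 'M[R]_N) (i j : 'I_N) : R := (M i j + 1 / D) / (d + 1)%:R.

Lemma sum_unstretch (F : 'I_N -> R) : (0 < d)%N -> \sum_k F k = 1 ->
  \sum_k (F k + 1 / D) / (d + 1)%:R = 1.
Proof.
move=> d0 F1; rewrite -mulr_suml big_split /= F1 sumr_const card_ord.
rewrite -[_ *+ N]mulr_natr natrX natrD.
have D0 : D != 0 by rewrite pnatr_eq0 -lt0n.
have D1 : D + 1 != 0 by rewrite natr1 pnatr_eq0.
by field; rewrite D0 D1.
Qed.

Lemma stretched_unstretch (M : 'M[R]_N) : (0 < d)%N ->
  (forall i, \sum_j M i j = 1) -> stretched (unstretch M) = M.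
Proof.
move=> d0 rowM; apply/matrixP => i j.
rewrite mxE (sum_unstretch d0 (rowM i)) /unstretch natrD.
have D1 : D + 1 != 0 by rewrite natr1 pnatr_eq0.
by rewrite mulrC divfK // mulr1 addrK.
Qed.

End Stretched.

Section Qplex.
Variables (R : realFieldType) (d : nat) (Q : vec R d -> Prop).
Hypotheses (d_ge2 : (2 <= d)%N) (hQ : qplex Q).
Local Notation N := (d ^ 2)%N.
Local Notation D := (d%:R : R).
Local Notation c := (@cvec R d).

Lemma d_gt0 : (0 < d)%N. Proof. exact: leq_trans d_ge2. Qed.
Lemma D_ge2 : 2 <= D. Proof. by rewrite ler_nat. Qed.
Lemma D_neq0 : D != 0. Proof. by apply: lt0r_neq0; have := D_ge2; lra. Qed.
Lemma Dp1_neq0 : D + 1 != 0. Proof. by apply: lt0r_neq0; have := D_ge2; lra. Qed.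
Lemma Dm1_neq0 : D - 1 != 0. Proof. by apply: lt0r_neq0; have := D_ge2; lra. Qed.

Lemma ro2E : ro2 R d = (D - 1) / (D ^+ 2 * (D + 1)).
Proof. by rewrite /ro2 natrX natrD natrB // d_gt0. Qed.

Lemma polar_boundE : 1 / (d * (d + 1))%:R = 1 / (D * (D + 1)) :> R.
Proof. by rewrite natrM natrD. Qed.

Lemma qplex_inH q : Q q -> inH q. Proof. by case/(hQ.1) => -[]. Qed.

Lemma cvec_inH : inH c.
Proof.
rewrite /inH /cvec sumr_const card_ord -[_ *+ N]mulr_natr mul1r mulVf //.
by rewrite natrX expf_neq0 // D_neq0.
Qed.

(* As [Q] lies in the out-ball, [Q = Q*] contains the polar of the out-ball,
   the ball of squared radius [r_in^2 = 1 / (D^2 (D^2 - 1))]: Cauchy-Schwarz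
   (in the form of [dot_lower_bound] with [a = D - 1 = r_o / r_in]) gives
   [<u - c, q - c> >= - r_in r_o = 1 / (D (D + 1)) - 1 / D^2]. *)
Lemma inner_ball_sub_qplex u : inH u ->
  normsq (vsub u c) <= 1 / (D ^+ 2 * (D ^+ 2 - 1)) -> Q u.
Proof.
move=> Hu Bu; apply/(hQ.2 u).1; split=> // q Qq.
have [_ [Hq Bq]] := hQ.1 q Qq.
rewrite (dot_vsub_cvec d_gt0 Hu Hq) polar_boundE natrX.
have := dot_lower_bound (vsub u c) (vsub q c) (D - 1).
move: Bu Bq; rewrite ro2E.
set X := normsq _; set Y := normsq _; set Z := dot _ _ => Bu Bq ZXY.
set K := 1 / (D ^+ 2 * (D + 1)).
have := D_neq0; have := Dp1_neq0; have := Dm1_neq0; have := D_ge2 => D2 Dm1 Dp1 D0.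
have XK : (D - 1) ^+ 2 * X <= (D - 1) * K.
  have -> : (D - 1) * K = (D - 1) ^+ 2 * (1 / (D ^+ 2 * (D ^+ 2 - 1))).
    rewrite /K (_ : D ^+ 2 - 1 = (D - 1) * (D + 1)); last by ring.
    by field; rewrite D0 Dp1 Dm1.
  by apply: ler_wpM2l; rewrite ?sqr_ge0.
have YK : Y <= (D - 1) * K by rewrite /K mul1r.
have : 0 <= (D - 1) * (Z + K) by lra.
rewrite pmulr_rge0; last lra.
have -> : 1 / (D * (D + 1)) = 1 / D ^+ 2 - K by rewrite /K; field; rewrite D0 Dp1.
lra.
Qed.

Lemma cvec_in_qplex : Q c.
Proof.
apply: inner_ball_sub_qplex cvec_inH _.
rewrite (_ : normsq _ = 0); last first.
  by rewrite /normsq /dot big1 // => k _; rewrite /vsub subrr mulr0.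
have := D_ge2 => D2; apply: divr_ge0 => //; apply: mulr_ge0; first exact: sqr_ge0.
by rewrite subr_ge0; nra.
Qed.

Lemma perturbed_cvec_in_qplex k l : k != l ->
  Q (fun j => c j + 1 / (2 * D ^+ 2) * dir k l j).
Proof.
move=> kl; set t := 1 / (2 * D ^+ 2).
apply: inner_ball_sub_qplex.
  by rewrite /inH big_split /= cvec_inH -mulr_sumr sum_dir mulr0 addr0.
have -> : normsq (vsub (fun j => c j + t * dir k l j) c) = t ^+ 2 * normsq (dir k l).
  rewrite /normsq /dot mulr_sumr; apply: eq_bigr => j _.
  by rewrite /vsub addrC addKr; ring.
rewrite normsq_dir // /t; have := D_ge2 => D2; have := D_neq0 => D0.
have DD_neq0 : D ^+ 2 - 1 != 0.
  by rewrite subr_eq0 eq_sym -(expr1n _ 2) eqrXn2 ?ler01 //; lra.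
rewrite -subr_ge0 (_ : _ - _ = (D ^+ 2 + 1) / (2 * D ^+ 2 * D ^+ 2 * (D ^+ 2 - 1))).
  apply: divr_ge0; first by rewrite addr_ge0 ?sqr_ge0.
  by apply: mulr_ge0; [rewrite !mulr_ge0 ?sqr_ge0 | nra].
by field; rewrite D0 DD_neq0.
Qed.

(* [Q] contains a ball around [c] in [H]; testing [f] on [c + t (e_k - e_l)]
   shows that [f] is constant. *)
Lemma dot_eq1_on_qplex (f : vec R d) :
  (forall q, Q q -> dot f q = 1) -> forall j, f j = 1.
Proof.
move=> fQ.
have f_const k l : f k = f l.
  have [-> // | kl] := eqVneq k l.
  set t : R := 1 / (2 * D ^+ 2).
  have t_neq0 : t != 0.
    by rewrite /t mul1r invr_eq0 mulf_neq0 ?expf_neq0 ?D_neq0 ?pnatr_eq0.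
  have := fQ _ (perturbed_cvec_in_qplex kl); rewrite -/t.
  rewrite /dot (eq_bigr (fun j => f j * c j + t * (f j * dir k l j))); last first.
    by move=> j _; ring.
  rewrite big_split /= -mulr_sumr -/(dot f c) -/(dot f (dir k l)) dot_dir.
  rewrite (fQ c cvec_in_qplex) -[RHS]addr0 => /addrI /eqP.
  by rewrite mulf_eq0 (negbTE t_neq0) subr_eq0 => /eqP.
move=> j; have := fQ c cvec_in_qplex.
rewrite /dot (eq_bigr (fun i => f j * c i)); last by move=> i _; rewrite (f_const i j).
by rewrite -mulr_sumr cvec_inH mulr1.
Qed.

Lemma image_r_stretched r : image_r Q r = image_mx (stretched r) Q.
Proof.
apply: functional_extensionality => u; apply: propositional_extensionality.
by split=> -[q Qq ->]; exists q; rewrite // qr_stretched //; apply: qplex_inH.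
Qed.

Lemma qplex_image_orthogonal (M : 'M[R]_N) : orthogonal_mx M ->
  (forall j, \sum_i M i j = 1) -> (forall q i, Q q -> 0 <= mxact M q i) ->
  qplex (image_mx M Q).
Proof.
move=> MO colM MQ_ge0.
have rowM := orthogonal_row_sums1 MO colM.
have Mc : mxact M c = c.
  by apply: functional_extensionality => i; rewrite /mxact -mulr_suml rowM mul1r.
have MQ_inH q : Q q -> inH (mxact M q).
  by move=> Qq; rewrite /inH sum_mxact //; apply: qplex_inH.
split=> [_ [q Qq ->] | u].
  have [_ [_ Bq]] := hQ.1 q Qq.
  split; first by split=> [i|]; [exact: MQ_ge0 | exact: MQ_inH].
  split; first exact: MQ_inH.
  by rewrite -Mc -mxact_vsub /normsq dot_mxact_orthogonal.
split=> [[Hu uMQ] | [q Qq ->]].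
  have Qp : Q (mxact M^T u).
    apply/(hQ.2 _).1; split=> [|q Qq].
      rewrite /inH sum_mxact // => j.
      by rewrite -(rowM j); apply: eq_bigr => i _; rewrite mxE.
    by rewrite -dot_mxact_tr; apply: uMQ; exists q.
  by exists (mxact M^T u); rewrite // mxact_mul (mulmx1C MO) mxact1.
split=> [|_ [q' Qq' ->]]; first exact: MQ_inH.
by rewrite dot_mxact_orthogonal //; apply: ((hQ.2 q).2 Qq).2.
Qed.

Lemma col_sums1_of_image_inH (M : 'M[R]_N) :
  (forall q, Q q -> inH (mxact M q)) -> forall j, \sum_i M i j = 1.
Proof.
move=> MQ_inH; apply: dot_eq1_on_qplex => q Qq.
rewrite -[RHS](MQ_inH q Qq) /mxact exchange_big /dot.
by apply: eq_bigr => j _; rewrite mulr_suml.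
Qed.

Lemma unstretch_in_qplex (M : 'M[R]_N) i : (forall i, \sum_j M i j = 1) ->
  (forall q, Q q -> 0 <= mxact M q i) -> Q (unstretch M i).
Proof.
move=> rowM MQ_ge0; apply/(hQ.2 _).1; split=> [|q Qq].
  exact: sum_unstretch d_gt0 (rowM i).
have -> : dot (unstretch M i) q = (mxact M q i + 1 / D) / (d + 1)%:R.
  rewrite /dot /unstretch (eq_bigr (fun j => (M i j * q j + 1 / D * q j) / (d + 1)%:R)).
    by rewrite -mulr_suml big_split /= -mulr_sumr (qplex_inH Qq) mulr1.
  by move=> j _; ring.
have := MQ_ge0 q Qq; rewrite polar_boundE natrD => Mq_ge0.
have := D_ge2 => D2; rewrite ler_pdivlMr; last lra.
rewrite (_ : 1 / (D * (D + 1)) * (D + 1) = 1 / D); last by field; rewrite D_neq0 Dp1_neq0.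
lra.
Qed.

Lemma orthogonal_stretched_type_preserving (M : 'M[R]_N) :
  orthogonal_mx M -> qplex (image_mx M Q) ->
  type_preserving Q (unstretch M) /\ stretched (unstretch M) = M.
Proof.
move=> MO MQ.
have MQ_Delta q : Q q -> inDelta (mxact M q).
  by move=> Qq; apply: (MQ.1 _ (ex_intro2 _ _ q Qq erefl)).1.
have colM := col_sums1_of_image_inH (fun q Qq => (MQ_Delta q Qq).2).
have rowM := orthogonal_row_sums1 MO colM.
have MQ_ge0 q i : Q q -> 0 <= mxact M q i by move=> Qq; apply: (MQ_Delta q Qq).1.
have stM := stretched_unstretch d_gt0 rowM.
split=> //; split; last by rewrite image_r_stretched stM.
split=> [i j | j]; last exact: sum_unstretch d_gt0 (colM j).
have [[r_ge0 _] _] := hQ.1 _ (unstretch_in_qplex rowM (fun q => MQ_ge0 q i)).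
exact: r_ge0.
Qed.

Section RegularSimplex.
Variables (s : 'I_N -> vec R d) (a : R).
Hypotheses (s_Q : forall i, Q (s i)) (s_So : forall i, inSo (s i)).
Hypothesis s_inj : injective s.
Hypothesis s_side : forall i j, i != j -> normsq (vsub (s i) (s j)) = a.
Local Notation S := (fun i j => s i j).

Lemma stretched_simplexE i j : stretched S i j = (d + 1)%:R * s i j - 1 / D.
Proof. by rewrite mxE (s_So i).1 mulr1. Qed.

Lemma simplex_gram i j :
  dot (vsub (s i) c) (vsub (s j) c) = a / 2 * (i == j)%:R + (ro2 R d - a / 2).
Proof.
have [<- | ij] := eqVneq i j; first by rewrite mulr1 addrC subrK; apply: (s_So i).2.
have := s_side ij; rewrite mulr0 add0r.
have -> : vsub (s i) (s j) = vsub (vsub (s i) c) (vsub (s j) c).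
  by apply: functional_extensionality => k; rewrite /vsub; ring.
by rewrite normsq_vsub (s_So i).2 (s_So j).2 => <-; field.
Qed.

Lemma simplex_side_neq0 : a != 0.
Proof.
have N_gt1 : (1 < N)%N by rewrite -[1%N]/(1 ^ 2)%N ltn_exp2r.
pose i0 : 'I_N := Ordinal (ltnW N_gt1); pose i1 : 'I_N := Ordinal N_gt1.
have i01 : i0 != i1 by [].
apply/eqP => a0; have := s_side i01; rewrite a0 => /eqP s01.
move/negP: i01; apply; apply/eqP/s_inj/functional_extensionality => k.
apply/eqP; rewrite -subr_eq0.
move: s01; rewrite psumr_eq0 => [/allP/(_ k)|k' _].
  by rewrite mem_index_enum mulf_eq0 orbb => /(_ isT).
by rewrite -expr2 sqr_ge0.
Qed.

Lemma simplex_side : a / 2 = 1 / (D + 1) ^+ 2.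
Proof.
pose U : 'M[R]_N := \matrix_(i, k) vsub (s i) c k.
have UJ : U *m (const_mx 1 : 'M[R]_N) = 0.
  apply/matrixP => i j; rewrite !mxE -[RHS](sum_vsub_cvec d_gt0 (s_So i).1).
  by apply: eq_bigr => k _; rewrite !mxE mulr1.
have UUt : U *m U^T = (a / 2)%:M + (ro2 R d - a / 2) *: (const_mx 1 : 'M[R]_N).
  apply/matrixP => i j; rewrite !mxE mulr1 -[_ *+ (i == j)]mulr_natr -simplex_gram.
  by apply: eq_bigr => k _; rewrite !mxE.
have a2_neq0 : a / 2 != 0 by rewrite mulf_neq0 ?invr_eq0 ?pnatr_eq0 ?simplex_side_neq0.
have N_gt0 : (0 < N)%N by rewrite expn_gt0 d_gt0.
have := gram_scalar_const_degenerate N_gt0 UJ UUt a2_neq0; rewrite natrX => deg.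
have DD_neq0 : (D - 1) * (D + 1) != 0 by rewrite mulf_neq0 ?Dm1_neq0 ?Dp1_neq0.
apply: (mulIf DD_neq0).
have -> : a / 2 * ((D - 1) * (D + 1)) = D ^+ 2 * ro2 R d by lra.
by rewrite ro2E; field; rewrite D_neq0 Dp1_neq0.
Qed.

Lemma simplex_stretched_orthogonal : orthogonal_mx (stretched S).
Proof.
set M := stretched S.
have Mik i k : M i k = (d + 1)%:R * vsub (s i) c k + 1 / N%:R.
  by rewrite stretched_simplexE /vsub /cvec natrX natrD; field; rewrite D_neq0.
suff MMt : M *m M^T = 1%:M by apply: mulmx1C.
apply/matrixP => i j; rewrite [LHS]mxE [RHS]mxE.
rewrite (eq_bigr (fun k => ((d + 1)%:R * vsub (s i) c k + 1 / N%:R) *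
                           ((d + 1)%:R * vsub (s j) c k + 1 / N%:R))); last first.
  by move=> k _; rewrite [_^T _ _]mxE !Mik.
rewrite sum_affine_mul !(sum_vsub_cvec d_gt0 (s_So _).1) addr0 mulr0 addr0.
rewrite simplex_gram simplex_side ro2E natrX natrD.
by case: (i == j); rewrite /=; field; rewrite D_neq0 Dp1_neq0.
Qed.

Lemma simplex_stretched_row_sums1 i : \sum_j stretched S i j = 1.
Proof.
rewrite (eq_bigr _ (fun j _ => stretched_simplexE i j)) sumrB -mulr_sumr (s_So i).1.
rewrite sumr_const card_ord -[_ *+ N]mulr_natr natrX natrD.
by field; rewrite D_neq0.
Qed.

Lemma simplex_stretched_col_sums1 j : \sum_i stretched S i j = 1.
Proof.
have MtO : orthogonal_mx (stretched S)^T.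
  by rewrite /orthogonal_mx trmxK; apply/mulmx1C/simplex_stretched_orthogonal.
have colMt k : \sum_i (stretched S)^T i k = 1.
  by rewrite -(simplex_stretched_row_sums1 k); apply: eq_bigr => i _; rewrite mxE.
rewrite -(orthogonal_row_sums1 MtO colMt j).
by apply: eq_bigr => i _; rewrite [RHS]mxE.
Qed.

Lemma simplex_measurement : measurement S.
Proof.
split=> [i j | j]; first by have [[s_ge0 _] _] := hQ.1 _ (s_Q i); apply: s_ge0.
have := simplex_stretched_col_sums1 j.
rewrite (eq_bigr _ (fun i _ => stretched_simplexE i j)) sumrB -mulr_sumr.
rewrite sumr_const card_ord -[_ *+ N]mulr_natr natrX natrD => /eqP.
rewrite -subr_eq0 (_ : _ - 1 = (D + 1) * (\sum_i s i j - 1)); last first.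
  by field; rewrite D_neq0.
by rewrite mulf_eq0 (negbTE Dp1_neq0) subr_eq0 => /eqP.
Qed.

Lemma simplex_type_preserving : type_preserving Q S.
Proof.
split; first exact: simplex_measurement.
rewrite image_r_stretched.
apply: qplex_image_orthogonal simplex_stretched_orthogonal simplex_stretched_col_sums1 _.
move=> q i Qq.
have -> : mxact (stretched S) q i = (d + 1)%:R * dot (s i) q - 1 / D.
  rewrite /mxact (eq_bigr (fun j => (d + 1)%:R * (s i j * q j) - 1 / D * q j)).
    by rewrite sumrB -!mulr_sumr (qplex_inH Qq) mulr1.
  by move=> j _; rewrite stretched_simplexE; ring.
have := ((hQ.2 _).2 (s_Q i)).2 q Qq; rewrite polar_boundE natrD subr_ge0.
have := D_ge2 => D2; rewrite -(ler_pM2l (_ : 0 < D + 1)); last lra.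
by rewrite (_ : (D + 1) * (1 / (D * (D + 1))) = 1 / D) //; field; rewrite D_neq0 Dp1_neq0.
Qed.

End RegularSimplex.

End Qplex.

Theorem mainTheorem11 (R : realFieldType) (d : nat) (hd : (2 <= d)%N)
  (Q : vec R d -> Prop) (hQ : qplex Q) :
  (forall s : 'I_(d ^ 2) -> vec R d,
     (forall i, Q (s i) /\ inSo (s i)) -> regular_simplex s ->
     type_preserving Q (fun i j => s i j) /\
     (forall i j, stretched (fun i j => s i j) i j
                  = (d + 1)%:R * s i j - 1 / d%:R)) /\
  (forall M : 'M[R]_(d ^ 2),
     orthogonal_mx M -> qplex (image_mx M Q) ->
     exists r, type_preserving Q r /\ stretched r = M).
Proof.
split=> [s s_QSo [s_inj [a s_side]] | M MO MQ].
  have s_Q i := (s_QSo i).1; have s_So i := (s_QSo i).2.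
  split; first exact: (simplex_type_preserving hd hQ s_Q s_So s_inj s_side).
  exact: stretched_simplexE s_So.
by exists (unstretch M); apply: orthogonal_stretched_type_preserving.
Qed.
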